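(* Let $(K,\delta)$ be a differential field of characteristic zero. Then $(K,\delta)$ is regular if and only if every constant of $K$ (every $c\in K$ with $\delta(c)=0$) is stable in $(K,\delta)$. Moreover, if $(K,\delta)$ is regular, then an element $f\in K$ is stable in $(K,\delta)$ if and only if $\delta(f)$ is stable in $(K,\delta)$.
   Context: A differential field $(K,\delta)$ is a field with an additive map $\delta$ satisfying $\delta(fg)=f\delta(g)+g\delta(f)$. It is regular if there exists $x\in K$ with $\delta(x)=1$. An element $f\in K$ is stable in $(K,\delta)$ if there is a sequence $(a_i)_{i\ge0}$ in $K$ with $a_0=f$ and $\delta(a_{i+1})=a_i$ for all $i\in\mathbb{N}$. *)

From HB Require Import structures.
From mathcomp Require Import all_boot all_order all_algebra.
Set Implicit Arguments. Unset Strict Implicit. Unset Printing Implicit Defensive.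
Import GRing.Theory.
Local Open Scope ring_scope.

Definition is_derivation (K : fieldType) (d : {additive K -> K}) : Prop :=
  forall f g : K, d (f * g) = f * d g + g * d f.

Definition regular (K : fieldType) (d : {additive K -> K}) : Prop :=
  exists x : K, d x = 1.

Definition stable (K : fieldType) (d : {additive K -> K}) (f : K) : Prop :=
  exists a : nat -> K, a 0%N = f /\ forall i : nat, d (a i.+1) = a i.

(** A constant [c] of a regular differential field, with [d x = 1], is stable
    through the sequence [c * x ^+ i / i`!], which needs characteristic zero;
    conversely an antiderivative of the stable constant [1] witnesses
    regularity.  Derivatives of stable elements are stable by prepending [f]
    to the sequence; and if [d f] is stable with antiderivatives [b_i], then
    [f] is the sum of the stable element [b_1] and the constant [f - b_1]. *)

From HB Require Import structures.
From mathcomp Require Import all_boot all_order all_algebra.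
From mathcomp Require Import ring.
Set Implicit Arguments. Unset Strict Implicit. Unset Printing Implicit Defensive.
Local Open Scope ring_scope.
Import GRing.Theory.

Section Derivation.
Variables (K : fieldType) (d : {additive K -> K}).
Hypothesis d_derivation : is_derivation d.

Lemma derivation1 : d 1 = 0.
Proof.
have := d_derivation 1 1; rewrite !mul1r => d1D.
by apply: (addrI (d 1)); rewrite addr0.
Qed.

Lemma derivation_natr n : d n%:R = 0.
Proof. by rewrite raddfMn derivation1 mul0rn. Qed.

Lemma derivationV_const k : d k = 0 -> d k^-1 = 0.
Proof.
have [->|k_nz dk0] := eqVneq k 0; first by rewrite invr0.
have := d_derivation k k^-1; rewrite mulfV // derivation1 dk0 mulr0 addr0.
by move/esym/eqP; rewrite mulf_eq0 (negbTE k_nz) => /eqP.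
Qed.

Lemma derivationMl_const c y : d c = 0 -> d (c * y) = c * d y.
Proof. by move=> dc0; rewrite d_derivation dc0 mulr0 addr0. Qed.

Lemma derivationX x n : d (x ^+ n.+1) = n.+1%:R * x ^+ n * d x.
Proof.
elim: n => [|n IHn]; first by rewrite expr1 expr0 mulr1 mul1r.
by rewrite exprS d_derivation IHn exprS -[in RHS](addn1 n.+1) natrD; ring.
Qed.

Lemma stable_const_of_regular x c :
  [pchar K] =i pred0 -> d x = 1 -> d c = 0 -> stable d c.
Proof.
move=> /pcharf0P natr_eq0 dx1 dc0.
exists (fun i => c / i`!%:R * x ^+ i); split.
  by rewrite fact0 divr1 expr0 mulr1.
move=> i; have dcoef0 : d (c / i.+1`!%:R) = 0.
  by rewrite d_derivation (derivationV_const (derivation_natr _)) dc0 !mulr0 addr0.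
rewrite derivationMl_const // derivationX dx1 factS natrM.
have i1_nz : i.+1%:R != 0 :> K by rewrite natr_eq0.
have fact_nz : i`!%:R != 0 :> K by rewrite natr_eq0 -lt0n fact_gt0.
by field; rewrite fact_nz addrC natr1.
Qed.

End Derivation.

Section Stable.
Variables (K : fieldType) (d : {additive K -> K}).

Lemma regular_of_stable1 : stable d 1 -> regular d.
Proof. by case=> a [a0 da]; exists (a 1%N); rewrite da a0. Qed.

Lemma stable_antiderivatives (a : nat -> K) :
  (forall i, d (a i.+1) = a i) -> forall k, stable d (a k).
Proof. by move=> da k; exists (fun i => a (i + k)%N); split=> // i; rewrite addSn da. Qed.

Lemma stableD f g : stable d f -> stable d g -> stable d (f + g).
Proof.
case=> a [a0 da] [b [b0 db]].
by exists (fun i => a i + b i); split=> [|i]; rewrite ?a0 ?b0 // raddfD da db.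
Qed.

Lemma stable_derivation f : stable d f -> stable d (d f).
Proof.
case=> a [a0 da]; exists (fun i => if i is j.+1 then a j else d f).
by split=> // -[|i] /=; rewrite ?a0 ?da.
Qed.

Lemma stable_of_stable_derivation f :
  (forall c, d c = 0 -> stable d c) -> stable d (d f) -> stable d f.
Proof.
move=> stable_const [b [b0 db]].
have dfb0 : d (f - b 1%N) = 0 by rewrite raddfB db b0 subrr.
rewrite -(subrK (b 1%N) f).
exact: stableD (stable_const _ dfb0) (stable_antiderivatives db 1).
Qed.

End Stable.

Theorem proposition2p8 (K : fieldType) (d : {additive K -> K}) :
  is_derivation d -> [pchar K] =i pred0 ->
  (regular d <-> (forall c : K, d c = 0 -> stable d c)) /\
  (regular d -> forall f : K, stable d f <-> stable d (d f)).
Proof.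
move=> d_derivation char0.
have stable_const : regular d -> forall c, d c = 0 -> stable d c.
  by case=> x dx1 c; apply: stable_const_of_regular dx1.
split; first split=> [//|stable_c].
  exact/regular_of_stable1/stable_c/derivation1.
move=> d_regular f; split; first exact: stable_derivation.
exact: stable_of_stable_derivation (stable_const d_regular).
Qed.
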